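(* Let $G_m$ be a bounded Vilenkin group and let $\varphi:P_+\to[1,\infty)$ be a nondecreasing function with $\limsup_{n\to\infty}\frac{\log^2(n+1)}{\varphi(n)}=+\infty$. Then the maximal operator $f\mapsto \sup_{n\in P_+}\frac{|\sigma_nf|}{\varphi(n)}$ is not bounded from $H_{1/2}(G_m)$ to $L_{1/2}(G_m)$; i.e., there is no constant $c<\infty$ such that $\big\|\sup_{n\in P_+}\frac{|\sigma_nf|}{\varphi(n)}\big\|_{L_{1/2}}\le c\|f\|_{H_{1/2}}$ for all martingales $f\in H_{1/2}(G_m)$.
   Context: Let $P_+$ be the positive integers and $P=P_+\cup\{0\}$. Let $m=(m_0,m_1,\dots)$ be a sequence of integers $m_k\ge 2$ with $\sup_k m_k<\infty$. $G_m$ is the complete direct product of the cyclic groups $Z_{m_k}$, with Haar measure $\mu$ = product of the uniform probability measures on $Z_{m_k}$. Put $M_0=1$, $M_{k+1}=m_kM_k$. For $x\in G_m$, $I_n(x)=\{y: y_j=x_j,\ 0\le j<n\}$. Every $n\in P$ is written uniquely as $n=\sum_j n_jM_j$, $n_j\in Z_{m_j}$. Rademacher functions $r_k(x)=\exp(2\pi i x_k/m_k)$; Vilenkin system $\psi_n=\prod_k r_k^{n_k}$. $\mathcal F_n$ is the $\sigma$-algebra generated by the sets $I_n(x)$. For a martingale $f=(f^{(n)})$ w.r.t. $(\mathcal F_n)$, $f^*=\sup_n|f^{(n)}|$; $H_p(G_m)$ consists of martingales with $\|f\|_{H_p}:=\|f^*\|_{L_p}<\infty$, $\|g\|_{L_p}=(\int|g|^pd\mu)^{1/p}$.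 $\hat f(i)=\lim_{k}\int f^{(k)}\overline{\psi_i}\,d\mu$, $S_nf=\sum_{k=0}^{n-1}\hat f(k)\psi_k$, $\sigma_nf=\frac1n\sum_{k=0}^{n-1}S_kf$. $\log$ denotes a fixed logarithm. *)

From Stdlib Require Import Reals Arith.
Open Scope R_scope.

Definition Cx : Type := (R * R)%type.
Definition C0 : Cx := (0, 0).
Definition Cadd (z w : Cx) : Cx := (fst z + fst w, snd z + snd w).
Definition Cmul (z w : Cx) : Cx :=
  (fst z * fst w - snd z * snd w, fst z * snd w + snd z * fst w).
Definition Cscale (a : R) (z : Cx) : Cx := (a * fst z, a * snd z).
Definition Cconj (z : Cx) : Cx := (fst z, - snd z).
Definition Cmod (z : Cx) : R := sqrt (fst z ^ 2 + snd z ^ 2).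

Fixpoint rsum (n : nat) (g : nat -> R) : R :=
  match n with O => 0 | S n' => rsum n' g + g n' end.
Fixpoint csum (n : nat) (g : nat -> Cx) : Cx :=
  match n with O => C0 | S n' => Cadd (csum n' g) (g n') end.

Fixpoint maxle (K : nat) (g : nat -> R) : R :=
  match K with O => g O | S K' => Rmax (maxle K' g) (g (S K')) end.
Fixpoint maxpos (N : nat) (g : nat -> R) : R :=
  match N with O => 0 | S N' => Rmax (maxpos N' g) (g (S N')) end.

Definition point_t := nat -> nat.
Definition inG (m : nat -> nat) (x : point_t) : Prop := forall k, (x k < m k)%nat.

Fixpoint Mk (m : nat -> nat) (k : nat) : nat :=
  match k with O => 1%nat | S k' => (m k' * Mk m k')%nat end.

Definition digit (m : nat -> nat) (n k : nat) : nat := ((n / Mk m k) mod m k)%nat.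

(* the t-th cylinder of level L (t < M_L), represented by its point with zero tail *)
Definition cpoint (m : nat -> nat) (L t : nat) : point_t :=
  fun j => if (j <? L)%nat then digit m t j else 0%nat.

(* Haar integral of an F_L-measurable function g *)
Definition integ (m : nat -> nat) (L : nat) (g : point_t -> R) : R :=
  / INR (Mk m L) * rsum (Mk m L) (fun t => g (cpoint m L t)).

(* psi_n(x) = prod_k r_k(x)^{n_k} = exp(2 pi i sum_k n_k x_k / m_k);
   n_k = 0 for k >= n+1 since M_k > n there *)
Definition psi (m : nat -> nat) (n : nat) (x : point_t) : Cx :=
  let th := 2 * PI * rsum (S n) (fun k => INR (digit m n k * x k) / INR (m k)) in
  (cos th, sin th).

Definition upd (x : point_t) (k a : nat) : point_t :=
  fun j => if (j =? k)%nat then a else x j.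

Definition martingale (m : nat -> nat) (f : nat -> point_t -> Cx) : Prop :=
  (forall k x y, inG m x -> inG m y -> (forall j, (j < k)%nat -> x j = y j) ->
      f k x = f k y) /\
  (forall k x, inG m x ->
      f k x = Cscale (/ INR (m k)) (csum (m k) (fun a => f (S k) (upd x k a)))).

(* hat f(i) = lim_k int f^(k) conj(psi_i); for a martingale the sequence is
   constant for k >= i+1 (psi_i is F_{i+1}-measurable), so we take k = i+1. *)
Definition fhat (m : nat -> nat) (f : nat -> point_t -> Cx) (i : nat) : Cx :=
  let g := fun x => Cmul (f (S i) x) (Cconj (psi m i x)) in
  (integ m (S i) (fun x => fst (g x)), integ m (S i) (fun x => snd (g x))).

Definition Sn (m : nat -> nat) (f : nat -> point_t -> Cx) (n : nat) (x : point_t) : Cx :=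
  csum n (fun k => Cmul (fhat m f k) (psi m k x)).

Definition sigma (m : nat -> nat) (f : nat -> point_t -> Cx) (n : nat) (x : point_t) : Cx :=
  Cscale (/ INR n) (csum n (fun k => Sn m f k x)).

(* integral of (max_{k<=K} |f^(k)|)^{1/2}; fstar = sup_K of these step functions,
   so int fstar^{1/2} = sup_K fstar_half_K (monotone convergence) *)
Definition fstar_half (m : nat -> nat) (f : nat -> point_t -> Cx) (K : nat) : R :=
  integ m K (fun x => sqrt (maxle K (fun k => Cmod (f k x)))).

(* integral of (max_{1<=n<=N} |sigma_n f|/phi(n))^{1/2} (F_N-measurable) *)
Definition Tphi_half (m : nat -> nat) (phi : nat -> R) (f : nat -> point_t -> Cx)
  (N : nat) : R :=
  integ m N (fun x => sqrt (maxpos N (fun n => Cmod (sigma m f n x) / phi n))).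

From Pilot Require Import Defs.
From Stdlib Require Import Reals Arith Bool Lia Lra Psatz FunctionalExtensionality.
Open Scope R_scope.

(* The counterexample is [f = D_{M_(K+1)} - D_{M_K}]. It lives on [I_K(0)] with
   [|f^(k)| <= M_(K+1)], so [(int (f^* )^(1/2))^2 <= m_K / M_K]. Its Fourier coefficients are
   the indicator of [[M_K, M_(K+1))], hence on the shell [I_tau(0) \ I_(tau+1)(0)] the Fejer
   mean of index [M_K + M_tau] equals [r_K] times [M_tau (M_tau - 1) / (2 (M_K + M_tau))].
   As the shell has measure about [1/M_tau], each of the [K - 1] shells contributes about
   [(M_K phi(2 M_K))^(-1/2)] to the [L_(1/2)] integral of the maximal operator. Boundedness
   would thus give [K^2 <= C phi(2 M_K)], whereas [log n] is of order [K] on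
   [[2 M_K, 2 M_(K+1))] for bounded [m], contradicting the [limsup] hypothesis. *)

Lemma ln_le x y : 0 < x -> x <= y -> ln x <= ln y.
Proof. intros Hx [Hlt|Heq]; [left; now apply ln_increasing|subst; lra]. Qed.

Lemma rsum_ext n g1 g2 :
  (forall i, (i < n)%nat -> g1 i = g2 i) -> rsum n g1 = rsum n g2.
Proof.
  induction n as [|n IH]; intros H; simpl; [reflexivity|].
  rewrite IH by (intros; apply H; lia). now rewrite H by lia.
Qed.

Lemma rsum_add p q g : rsum (p + q) g = rsum p g + rsum q (fun j => g (p + j)%nat).
Proof.
  induction q as [|q IH]; simpl; [rewrite Nat.add_0_r; ring|].
  rewrite Nat.add_succ_r; simpl. rewrite IH. ring.
Qed.

Lemma rsum_mul_split a b g :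
  rsum (a * b) g = rsum a (fun i => rsum b (fun j => g (i * b + j)%nat)).
Proof.
  induction a as [|a IH]; simpl; [reflexivity|].
  now rewrite Nat.add_comm, rsum_add, IH.
Qed.

Lemma rsum_const n c : rsum n (fun _ => c) = INR n * c.
Proof. induction n as [|n IH]; cbn [rsum]; [simpl; ring|]. rewrite IH, S_INR. ring. Qed.

Lemma rsum_scal n c g : rsum n (fun i => c * g i) = c * rsum n g.
Proof. induction n as [|n IH]; simpl; [ring|]. rewrite IH. ring. Qed.

Lemma rsum_plus n g1 g2 : rsum n (fun i => g1 i + g2 i) = rsum n g1 + rsum n g2.
Proof. induction n as [|n IH]; simpl; [ring|]. rewrite IH. ring. Qed.

Lemma rsum_minus n g1 g2 : rsum n (fun i => g1 i - g2 i) = rsum n g1 - rsum n g2.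
Proof. induction n as [|n IH]; simpl; [ring|]. rewrite IH. ring. Qed.

Lemma rsum_le n g1 g2 :
  (forall i, (i < n)%nat -> g1 i <= g2 i) -> rsum n g1 <= rsum n g2.
Proof.
  induction n as [|n IH]; intros H; simpl; [lra|].
  apply Rplus_le_compat; [apply IH; intros; apply H|apply H]; lia.
Qed.

Lemma rsum_swap n k h :
  rsum n (fun t => rsum k (fun u => h u t)) = rsum k (fun u => rsum n (fun t => h u t)).
Proof.
  induction n as [|n IH]; simpl.
  - rewrite rsum_const. ring.
  - now rewrite IH, <- rsum_plus.
Qed.

Lemma rsum_zero n g : (forall i, (i < n)%nat -> g i = 0) -> rsum n g = 0.
Proof. intros H. rewrite (rsum_ext n g (fun _ => 0)), rsum_const by auto. ring. Qed.

Lemma rsum_single n i0 g : (i0 < n)%nat ->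
  (forall i, (i < n)%nat -> i <> i0 -> g i = 0) -> rsum n g = g i0.
Proof.
  induction n as [|n IH]; intros Hi0 H; [lia|]. simpl.
  destruct (Nat.eq_dec i0 n) as [->|Hne].
  - rewrite rsum_zero by (intros; apply H; lia). ring.
  - rewrite IH, (H n) by (lia || (intros; apply H; lia)). ring.
Qed.

Lemma rsum_le_single n g b : 0 <= b ->
  (forall i, (i < n)%nat -> g i <= b) ->
  (forall i j, (i < n)%nat -> (j < n)%nat -> g i <> 0 -> g j <> 0 -> i = j) ->
  rsum n g <= b.
Proof.
  induction n as [|n IH]; intros Hb Hle Huniq; simpl; [lra|].
  destruct (Req_dec (g n) 0) as [Hz|Hnz].
  - rewrite Hz, Rplus_0_r. apply IH; auto.
  - rewrite rsum_zero; [rewrite Rplus_0_l; auto|].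
    intros i Hi. destruct (Req_dec (g i) 0) as [|Hgi]; auto.
    specialize (Huniq i n ltac:(lia) ltac:(lia) Hgi Hnz). lia.
Qed.

Lemma rsum_id q : rsum q INR = INR q * (INR q - 1) / 2.
Proof. induction q as [|q IH]; cbn [rsum]; [simpl; field|]. rewrite IH, S_INR. field. Qed.

Lemma rsum_partial_sums a q u c :
  (forall i, (i < a)%nat -> u i = 0) -> (forall i, (a <= i < a + q)%nat -> u i = c) ->
  rsum (a + q) (fun k => rsum k u) = c * (INR q * (INR q - 1) / 2).
Proof.
  intros Hlo Hhi.
  rewrite rsum_add, rsum_zero, Rplus_0_l
    by (intros; apply rsum_zero; intros; apply Hlo; lia).
  rewrite (rsum_ext _ _ (fun j => c * INR j)), rsum_scal, rsum_id; [reflexivity|].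
  intros j Hj. rewrite rsum_add, rsum_zero, Rplus_0_l by (intros; apply Hlo; lia).
  rewrite (rsum_ext _ _ (fun _ => c)), rsum_const by (intros; apply Hhi; lia). ring.
Qed.

Lemma csum_fst n g : fst (csum n g) = rsum n (fun i => fst (g i)).
Proof. induction n as [|n IH]; simpl; [reflexivity|]. now rewrite IH. Qed.

Lemma csum_snd n g : snd (csum n g) = rsum n (fun i => snd (g i)).
Proof. induction n as [|n IH]; simpl; [reflexivity|]. now rewrite IH. Qed.

Lemma csum_partial_sums a q u c :
  (forall i, (i < a)%nat -> u i = C0) -> (forall i, (a <= i < a + q)%nat -> u i = c) ->
  csum (a + q) (fun k => csum k u) = Cscale (INR q * (INR q - 1) / 2) c.
Proof.
  intros Hlo Hhi. unfold Cscale.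
  apply injective_projections; simpl.
  - rewrite csum_fst, (rsum_ext _ _ (fun k => rsum k (fun i => fst (u i))))
      by (intros; apply csum_fst).
    rewrite (rsum_partial_sums _ _ _ (fst c)); [ring| |];
      intros i Hi; [rewrite Hlo|rewrite Hhi]; auto.
  - rewrite csum_snd, (rsum_ext _ _ (fun k => rsum k (fun i => snd (u i))))
      by (intros; apply csum_snd).
    rewrite (rsum_partial_sums _ _ _ (snd c)); [ring| |];
      intros i Hi; [rewrite Hlo|rewrite Hhi]; auto.
Qed.

Lemma Cmul_1_l z : Cmul (1, 0) z = z.
Proof. destruct z; unfold Cmul; simpl; f_equal; ring. Qed.

Lemma Cmul_0_l z : Cmul C0 z = C0.
Proof. destruct z; unfold Cmul, C0; simpl; f_equal; ring. Qed.

Lemma Cscale_Cscale a b z : Cscale a (Cscale b z) = Cscale (a * b) z.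
Proof. unfold Cscale; simpl; f_equal; ring. Qed.

Lemma Cmod_real a : Cmod (a, 0) = Rabs a.
Proof. unfold Cmod; simpl. rewrite <- sqrt_Rsqr_abs. f_equal. unfold Rsqr. ring. Qed.

Lemma Cmod_C0 : Cmod C0 = 0.
Proof. unfold C0. rewrite Cmod_real. apply Rabs_R0. Qed.

Lemma Cmod_Cscale_expi a t : Cmod (Cscale a (cos t, sin t)) = Rabs a.
Proof.
  unfold Cmod, Cscale; simpl. rewrite <- sqrt_Rsqr_abs. f_equal.
  pose proof (sin2_cos2 t). unfold Rsqr in *. nra.
Qed.

Lemma rsum_cos_arith t n :
  2 * sin (t / 2) * rsum n (fun a => cos (INR a * t)) = sin (INR n * t - t / 2) + sin (t / 2).
Proof.
  induction n as [|n IH]; cbn [rsum].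
  - replace (INR 0 * t - t / 2) with (- (t / 2)) by (simpl; ring). rewrite sin_neg. ring.
  - rewrite Rmult_plus_distr_l, IH, S_INR.
    replace ((INR n + 1) * t - t / 2) with (INR n * t + t / 2) by field.
    replace (INR n * t - t / 2) with (INR n * t + - (t / 2)) by ring.
    rewrite !sin_plus, sin_neg, cos_neg. ring.
Qed.

Lemma rsum_sin_arith t n :
  2 * sin (t / 2) * rsum n (fun a => sin (INR a * t)) = cos (t / 2) - cos (INR n * t - t / 2).
Proof.
  induction n as [|n IH]; cbn [rsum].
  - replace (INR 0 * t - t / 2) with (- (t / 2)) by (simpl; ring). rewrite cos_neg. ring.
  - rewrite Rmult_plus_distr_l, IH, S_INR.
    replace ((INR n + 1) * t - t / 2) with (INR n * t + t / 2) by field.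
    replace (INR n * t - t / 2) with (INR n * t + - (t / 2)) by ring.
    rewrite !cos_plus, sin_neg, cos_neg. ring.
Qed.

Lemma rsum_roots_of_unity d q t : (0 < d < q)%nat -> t = 2 * PI * INR d / INR q ->
  rsum q (fun a => cos (INR a * t)) = 0 /\ rsum q (fun a => sin (INR a * t)) = 0.
Proof.
  intros Hd ->. set (t := 2 * PI * INR d / INR q).
  assert (Hq : 0 < INR q) by (apply lt_0_INR; lia).
  assert (Hd0 : 0 < INR d) by (apply lt_0_INR; lia).
  assert (Hdq : INR d < INR q) by (apply lt_INR; lia).
  assert (Hs : 0 < sin (t / 2)).
  { pose proof PI_RGT_0. apply sin_gt_0; unfold t.
    - apply Rmult_lt_0_compat; [|lra]. unfold Rdiv.
      apply Rmult_lt_0_compat; [nra|apply Rinv_0_lt_compat; lra].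
    - apply (Rmult_lt_reg_r (INR q)); auto. unfold Rdiv. field_simplify; nra. }
  assert (Hend : INR q * t - t / 2 = - (t / 2) + 2 * INR d * PI) by (unfold t; field; lra).
  pose proof (rsum_cos_arith t q) as Hc. pose proof (rsum_sin_arith t q) as Hsn.
  rewrite Hend, sin_period, sin_neg in Hc. rewrite Hend, cos_period, cos_neg in Hsn.
  split; apply (Rmult_eq_reg_l (2 * sin (t / 2))); lra.
Qed.

Lemma avg_roots_of_unity d q t : (d < q)%nat -> t = 2 * PI * INR d / INR q ->
  / INR q * rsum q (fun a => cos (INR a * t)) = (if (d =? 0)%nat then 1 else 0) /\
  / INR q * rsum q (fun a => sin (INR a * t)) = 0.
Proof.
  intros Hd ->. assert (Hq : INR q <> 0) by (apply not_0_INR; lia).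
  destruct (Nat.eqb_spec d 0) as [->|Hd0].
  - simpl INR.
    rewrite (rsum_ext _ _ (fun _ => 1)), (rsum_ext _ (fun a => sin _) (fun _ => 0)), !rsum_const.
    + split; field; auto.
    + intros. replace (INR i * (2 * PI * 0 / INR q)) with 0 by (field; auto). apply sin_0.
    + intros. replace (INR i * (2 * PI * 0 / INR q)) with 0 by (field; auto). apply cos_0.
  - destruct (rsum_roots_of_unity d q _ ltac:(lia) eq_refl) as [-> ->]. split; ring.
Qed.

Lemma maxle_le K g b : (forall k, (k <= K)%nat -> g k <= b) -> maxle K g <= b.
Proof.
  induction K as [|K IH]; simpl; intros H; [apply H; lia|].
  apply Rmax_lub; [apply IH; intros|apply H]; auto.
Qed.

Lemma maxpos_ge N g n : (1 <= n <= N)%nat -> g n <= maxpos N g.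
Proof.
  induction N as [|N IH]; intros Hn; [lia|]. simpl.
  destruct (Nat.eq_dec n (S N)) as [->|]; [apply Rmax_r|].
  eapply Rle_trans; [apply IH; lia|apply Rmax_l].
Qed.

Section Vilenkin.

Variable m : nat -> nat.
Hypothesis hm : forall k, (2 <= m k)%nat.

Lemma Mk_pos k : (0 < Mk m k)%nat.
Proof. induction k; simpl; [lia|]. pose proof (hm k). nia. Qed.

Lemma Mk_gt k : (k < Mk m k)%nat.
Proof. induction k; simpl; [lia|]. pose proof (hm k). nia. Qed.

Lemma Mk_le j L : (j <= L)%nat -> (Mk m j <= Mk m L)%nat.
Proof. induction 1 as [|L _ IH]; [lia|]. simpl. pose proof (hm L). nia. Qed.

Lemma Mk_double K : (2 * Mk m K <= Mk m (S K))%nat.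
Proof. simpl. pose proof (hm K). nia. Qed.

Lemma Mk_divide j L : (j <= L)%nat -> Nat.divide (Mk m j) (Mk m L).
Proof.
  induction 1 as [|L _ IH]; [apply Nat.divide_refl|].
  simpl. now apply Nat.divide_mul_r.
Qed.

Lemma Mk_le_pow B : (forall k, (m k <= B)%nat) -> forall k, (Mk m k <= B ^ k)%nat.
Proof. intros HB k. induction k; simpl; [lia|]. pose proof (HB k). nia. Qed.

Lemma bracket_Mk n : (2 <= n)%nat -> exists K, (2 * Mk m K <= n < 2 * Mk m (S K))%nat.
Proof.
  induction n as [|n IH]; intros Hn; [lia|].
  destruct (Nat.eq_dec n 1) as [->|Hn1].
  - exists 0%nat. simpl. pose proof (hm 0%nat). lia.
  - destruct IH as [K HK]; [lia|].
    destruct (Nat.eq_dec (S n) (2 * Mk m (S K))).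
    + exists (S K). pose proof (Mk_double (S K)). lia.
    + exists K. lia.
Qed.

Lemma ln_succ_le_Mk B K n : (forall k, (m k <= B)%nat) -> (n < 2 * Mk m (S K))%nat ->
  ln (INR n + 1) <= INR (K + 2) * ln (INR B).
Proof.
  intros HB Hn. pose proof (Mk_le_pow B HB (S K)) as HP.
  assert (HB2 : (2 <= B)%nat) by (pose proof (hm 0%nat); pose proof (HB 0%nat); lia).
  assert (Hnat : (n + 1 <= B ^ (K + 2))%nat).
  { replace (K + 2)%nat with (S (S K)) by lia.
    change (B ^ S (S K))%nat with (B * (B * B ^ K))%nat.
    change (B ^ S K)%nat with (B * B ^ K)%nat in HP. nia. }
  apply le_INR in Hnat. rewrite plus_INR, pow_INR in Hnat. simpl INR in Hnat.
  assert (0 < INR B) by (apply lt_0_INR; lia).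
  rewrite <- ln_pow by lra. apply ln_le; [pose proof (pos_INR n)|]; lra.
Qed.

Lemma INR_Mk_pos k : 0 < INR (Mk m k).
Proof. apply lt_0_INR, Mk_pos. Qed.

Lemma INR_m_pos k : 0 < INR (m k).
Proof. apply lt_0_INR. pose proof (hm k). lia. Qed.

Lemma digit_small n k : (n < Mk m k)%nat -> digit m n k = 0%nat.
Proof. intros H. unfold digit. rewrite Nat.div_small by lia. apply Nat.Div0.mod_0_l. Qed.

Lemma digit_shift a t j L : (j < L)%nat -> digit m (a * Mk m L + t) j = digit m t j.
Proof.
  intros H. unfold digit. destruct (Mk_divide (S j) L H) as [P HP].
  rewrite HP. simpl. pose proof (Mk_pos j).
  replace (a * (P * (m j * Mk m j)) + t)%nat with ((a * P * m j) * Mk m j + t)%nat by ring.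
  rewrite Nat.div_add_l, (Nat.add_comm (a * P * m j)), Nat.Div0.mod_add by lia.
  reflexivity.
Qed.

Lemma digit_top a t L : (t < Mk m L)%nat -> (a < m L)%nat -> digit m (a * Mk m L + t) L = a.
Proof.
  intros Ht Ha. unfold digit. pose proof (Mk_pos L).
  rewrite Nat.div_add_l, (Nat.div_small t), Nat.add_0_r by lia. now apply Nat.mod_small.
Qed.

Lemma cpoint_succ L a t : (t < Mk m L)%nat -> (a < m L)%nat ->
  cpoint m (S L) (a * Mk m L + t) = upd (cpoint m L t) L a.
Proof.
  intros Ht Ha. extensionality j. unfold cpoint, upd.
  destruct (Nat.eqb_spec j L) as [->|Hne].
  - replace (L <? S L)%nat with true by (symmetry; apply Nat.ltb_lt; lia).
    now apply digit_top.
  - destruct (Nat.ltb_spec j L).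
    + replace (j <? S L)%nat with true by (symmetry; apply Nat.ltb_lt; lia).
      now apply digit_shift.
    + now replace (j <? S L)%nat with false by (symmetry; apply Nat.ltb_ge; lia).
Qed.

Definition depends_below (L : nat) (g : point_t -> R) : Prop :=
  forall x y, (forall j, (j < L)%nat -> x j = y j) -> g x = g y.

Lemma depends_below_upd L a g :
  depends_below (S L) g -> depends_below L (fun x => g (upd x L a)).
Proof.
  intros Hg x y Hxy. apply Hg. intros j Hj. unfold upd.
  destruct (Nat.eqb_spec j L); [reflexivity|apply Hxy; lia].
Qed.

Lemma integ_ext L g1 g2 : (forall x, g1 x = g2 x) -> integ m L g1 = integ m L g2.
Proof. intros H. now replace g1 with g2 by (extensionality x; auto). Qed.

Lemma integ_scal L c g : integ m L (fun x => c * g x) = c * integ m L g.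
Proof. unfold integ. rewrite rsum_scal. ring. Qed.

Lemma integ_minus L g1 g2 :
  integ m L (fun x => g1 x - g2 x) = integ m L g1 - integ m L g2.
Proof. unfold integ. rewrite rsum_minus. ring. Qed.

Lemma integ_rsum L n h :
  integ m L (fun x => rsum n (fun u => h u x)) = rsum n (fun u => integ m L (h u)).
Proof. unfold integ. now rewrite rsum_swap, <- rsum_scal. Qed.

Lemma integ_le L g1 g2 :
  (forall t, (t < Mk m L)%nat -> g1 (cpoint m L t) <= g2 (cpoint m L t)) ->
  integ m L g1 <= integ m L g2.
Proof.
  intros H. unfold integ. apply Rmult_le_compat_l.
  - left. apply Rinv_0_lt_compat, INR_Mk_pos.
  - now apply rsum_le.
Qed.

(* Fubini over the last coordinate: [I_L] splits into [m L] cylinders of level [L+1]. *)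
Lemma integ_succ L g :
  integ m (S L) g = / INR (m L) * rsum (m L) (fun a => integ m L (fun x => g (upd x L a))).
Proof.
  unfold integ. simpl Mk. rewrite rsum_mul_split, rsum_scal, mult_INR.
  pose proof (INR_Mk_pos L). pose proof (INR_m_pos L).
  rewrite Rinv_mult, Rmult_assoc. do 2 f_equal.
  apply rsum_ext; intros a Ha. apply rsum_ext; intros t Ht. now rewrite cpoint_succ.
Qed.

Lemma integ_depends_below L0 L g : depends_below L0 g -> (L0 <= L)%nat ->
  integ m L g = integ m L0 g.
Proof.
  intros Hg HL. induction HL as [|L HL IH]; [reflexivity|].
  rewrite integ_succ, <- IH.
  rewrite (rsum_ext _ _ (fun _ => integ m L g)), rsum_const.
  - pose proof (INR_m_pos L). field. lra.
  - intros a Ha. apply integ_ext. intros x. apply Hg. intros j Hj. unfold upd.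
    destruct (Nat.eqb_spec j L); [lia|reflexivity].
Qed.

Lemma integ_zero L : integ m L (fun _ => 0) = 0.
Proof. unfold integ. rewrite rsum_const. ring. Qed.

Definition zero_pt : point_t := fun _ => 0%nat.

Lemma upd_zero_pt L : upd zero_pt L 0 = zero_pt.
Proof. extensionality j. unfold upd, zero_pt. now destruct (j =? L)%nat. Qed.

Lemma upd_eq x L a : upd x L a L = a.
Proof. unfold upd. now rewrite Nat.eqb_refl. Qed.

Fixpoint inI0 (L : nat) (x : point_t) : bool :=
  match L with O => true | S L' => inI0 L' x && (x L' =? 0)%nat end.

Lemma inI0P L x : inI0 L x = true <-> forall j, (j < L)%nat -> x j = 0%nat.
Proof.
  induction L as [|L IH]; simpl; [split; intros; [lia|auto]|].
  rewrite andb_true_iff, IH, Nat.eqb_eq. split.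
  - intros [H1 H2] j Hj. destruct (Nat.eq_dec j L) as [->|]; auto. apply H1; lia.
  - intros H. split; [intros; apply H|apply H]; lia.
Qed.

Lemma inI0_ext L x y : (forall j, (j < L)%nat -> x j = y j) -> inI0 L x = inI0 L y.
Proof.
  induction L as [|L IH]; intros H; simpl; [reflexivity|].
  rewrite IH, H by (lia || (intros; apply H; lia)). reflexivity.
Qed.

Lemma inI0_upd L x a : inI0 L (upd x L a) = inI0 L x.
Proof.
  apply inI0_ext. intros j Hj. unfold upd. destruct (Nat.eqb_spec j L); [lia|reflexivity].
Qed.

Lemma inI0_succ_upd L x a : inI0 (S L) (upd x L a) = inI0 L x && (a =? 0)%nat.
Proof. simpl. now rewrite inI0_upd, upd_eq. Qed.

(* Within level [L], the only cylinder inside [I_L(0)] is the one of [zero_pt]. *)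
Lemma integ_I0 L g :
  integ m L (fun x => if inI0 L x then g x else 0) = g zero_pt / INR (Mk m L).
Proof.
  revert g. induction L as [|L IH]; intros g.
  - unfold integ. simpl. replace (cpoint m 0 0) with zero_pt; [field|].
    extensionality j. reflexivity.
  - rewrite integ_succ, (rsum_single _ 0%nat); [| pose proof (hm L); lia |].
    + rewrite (integ_ext _ _ (fun x => if inI0 L x then g (upd x L 0) else 0)).
      * rewrite IH, upd_zero_pt. simpl Mk. rewrite mult_INR.
        pose proof (INR_m_pos L). pose proof (INR_Mk_pos L). field. split; lra.
      * intros x. rewrite inI0_succ_upd, andb_true_r. reflexivity.
    + intros a Ha Ha0. transitivity (integ m L (fun _ => 0)); [|apply integ_zero].
      apply integ_ext. intros x.
      rewrite inI0_succ_upd. destruct (Nat.eqb_spec a 0); [lia|]. now rewrite andb_false_r.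
Qed.

(* The Dirichlet kernel [D_{M_L}], in the closed form [M_L 1_{I_L(0)}] given by Paley's lemma. *)
Definition dirichletM (L : nat) (x : point_t) : R :=
  if inI0 L x then INR (Mk m L) else 0.

Lemma dirichletM_ext L x y :
  (forall j, (j < L)%nat -> x j = y j) -> dirichletM L x = dirichletM L y.
Proof. intros H. unfold dirichletM. now rewrite (inI0_ext L x y H). Qed.

(* [k |-> D_{M_(min k l)}] is a martingale. *)
Lemma dirichletM_cond_exp k l x :
  dirichletM (Nat.min k l) x =
  / INR (m k) * rsum (m k) (fun a => dirichletM (Nat.min (S k) l) (upd x k a)).
Proof.
  pose proof (INR_m_pos k). destruct (Nat.lt_ge_cases k l).
  - rewrite Nat.min_l, Nat.min_l by lia.
    rewrite (rsum_single _ 0%nat); [| pose proof (hm k); lia |].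
    + unfold dirichletM. rewrite inI0_succ_upd, andb_true_r. simpl Mk.
      rewrite mult_INR. destruct (inI0 k x); field; lra.
    + intros a Ha Ha0. unfold dirichletM. rewrite inI0_succ_upd.
      destruct (Nat.eqb_spec a 0); [lia|]. now rewrite andb_false_r.
  - rewrite Nat.min_r, Nat.min_r by lia.
    rewrite (rsum_ext _ _ (fun _ => dirichletM l x)), rsum_const; [field; lra|].
    intros a Ha. apply dirichletM_ext. intros j Hj. unfold upd.
    destruct (Nat.eqb_spec j k); [lia|reflexivity].
Qed.

Lemma integ_dirichletM L L' h : depends_below L h -> (L <= L')%nat ->
  integ m L' (fun x => dirichletM L x * h x) = h zero_pt.
Proof.
  intros Hh HL. rewrite (integ_depends_below L); auto.
  - rewrite (integ_ext _ _ (fun x => if inI0 L x then INR (Mk m L) * h x else 0)).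
    + rewrite integ_I0. pose proof (INR_Mk_pos L). field. lra.
    + intros x. unfold dirichletM. destruct (inI0 L x); ring.
  - intros x y Hxy. now rewrite (dirichletM_ext L x y Hxy), (Hh x y Hxy).
Qed.

Lemma integ_dirichletM_succ L L' h : depends_below (S L) h -> (S L <= L')%nat ->
  integ m L' (fun x => dirichletM L x * h x) =
  / INR (m L) * rsum (m L) (fun a => h (upd zero_pt L a)).
Proof.
  intros Hh HL. rewrite (integ_depends_below (S L)), integ_succ; auto.
  - f_equal. apply rsum_ext. intros a Ha.
    rewrite <- (integ_dirichletM L L (fun x => h (upd x L a))) by (auto using depends_below_upd).
    apply integ_ext. intros x. unfold dirichletM. now rewrite inI0_upd.
  - intros x y Hxy. rewrite (Hh x y Hxy). f_equal. apply dirichletM_ext. intros; apply Hxy; lia.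
Qed.

Definition test_mart (K : nat) : nat -> point_t -> Cx :=
  fun k x => (dirichletM (Nat.min k (S K)) x - dirichletM (Nat.min k K) x, 0).

Lemma test_mart_martingale K : martingale m (test_mart K).
Proof.
  split.
  - intros k x y _ _ Hxy. unfold test_mart.
    rewrite (dirichletM_ext _ x y), (dirichletM_ext (Nat.min k K) x y);
      auto; intros; apply Hxy; lia.
  - intros k x _. unfold test_mart, Cscale. f_equal.
    + rewrite csum_fst. simpl. rewrite rsum_minus, Rmult_minus_distr_l.
      now rewrite (dirichletM_cond_exp k (S K)), (dirichletM_cond_exp k K).
    + rewrite csum_snd. simpl. rewrite rsum_const. ring.
Qed.

Lemma test_mart_early K k x : (k <= K)%nat -> test_mart K k x = C0.
Proof.
  intros Hk. unfold test_mart, C0. rewrite Nat.min_l, Nat.min_l by lia. f_equal. ring.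
Qed.

Lemma test_mart_late K k x : (K < k)%nat ->
  test_mart K k x = (dirichletM (S K) x - dirichletM K x, 0).
Proof. intros Hk. unfold test_mart. now rewrite Nat.min_r, Nat.min_r by lia. Qed.

Lemma psi_ext L i x y : (i < Mk m L)%nat ->
  (forall j, (j < L)%nat -> x j = y j) -> psi m i x = psi m i y.
Proof.
  intros Hi Hxy. unfold psi.
  rewrite (rsum_ext _ _ (fun k => INR (digit m i k * y k) / INR (m k))); [reflexivity|].
  intros k Hk.
  destruct (Nat.lt_ge_cases k L).
  - now rewrite Hxy.
  - rewrite digit_small; [reflexivity|]. pose proof (Mk_le L k). lia.
Qed.

Lemma psi_upd_zero_pt i K a : (K <= i)%nat ->
  let t := 2 * PI * INR (digit m i K) / INR (m K) in
  psi m i (upd zero_pt K a) = (cos (INR a * t), sin (INR a * t)).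
Proof.
  intros HK t. unfold psi. rewrite (rsum_single _ K); [| lia |].
  - rewrite upd_eq, mult_INR.
    replace (2 * PI * (INR (digit m i K) * INR a / INR (m K))) with (INR a * t)
      by (unfold t, Rdiv; ring).
    reflexivity.
  - intros k Hk Hne. unfold upd. destruct (Nat.eqb_spec k K); [lia|].
    unfold zero_pt. rewrite Nat.mul_0_r. simpl. unfold Rdiv. ring.
Qed.

Lemma digit_top_eq0 i K : (i < Mk m (S K))%nat -> (digit m i K =? 0)%nat = (i <? Mk m K)%nat.
Proof.
  intros Hi. simpl in Hi. pose proof (Mk_pos K). unfold digit.
  rewrite Nat.mod_small by (apply Nat.Div0.div_lt_upper_bound; lia).
  destruct (Nat.ltb_spec i (Mk m K)).
  - now rewrite Nat.div_small.
  - apply Nat.eqb_neq. intros Hz. apply Nat.div_small_iff in Hz; lia.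
Qed.

Lemma fhat_test_mart_high K i : (K <= i)%nat -> (i < Mk m (S K))%nat ->
  fhat m (test_mart K) i = (1 - if (digit m i K =? 0)%nat then 1 else 0, 0).
Proof.
  intros HK Hi. set (t := 2 * PI * INR (digit m i K) / INR (m K)).
  assert (Hpsi : forall a, psi m i (upd zero_pt K a) = (cos (INR a * t), sin (INR a * t)))
    by (intros; now apply psi_upd_zero_pt).
  assert (Hpsi0 : psi m i zero_pt = (1, 0)).
  { rewrite <- (upd_zero_pt K), Hpsi. simpl. now rewrite Rmult_0_l, cos_0, sin_0. }
  assert (Hloc : forall g : Cx -> R, depends_below (S K) (fun x => g (psi m i x)))
    by (intros g x y Hxy; now rewrite (psi_ext (S K) i x y)).
  destruct (avg_roots_of_unity (digit m i K) (m K) t) as [Hcos Hsin];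
    [apply Nat.mod_upper_bound; pose proof (hm K); lia|reflexivity|].
  unfold fhat. f_equal.
  - rewrite (integ_ext _ _ (fun x => dirichletM (S K) x * fst (psi m i x)
                                    - dirichletM K x * fst (psi m i x)))
      by (intros x; rewrite test_mart_late by lia; unfold Cmul, Cconj; simpl; ring).
    rewrite integ_minus, integ_dirichletM, integ_dirichletM_succ by (auto || lia).
    rewrite Hpsi0, <- Hcos. f_equal. f_equal. apply rsum_ext. intros a _. now rewrite Hpsi.
  - rewrite (integ_ext _ _ (fun x => dirichletM K x * snd (psi m i x)
                                    - dirichletM (S K) x * snd (psi m i x)))
      by (intros x; rewrite test_mart_late by lia; unfold Cmul, Cconj; simpl; ring).
    rewrite integ_minus, integ_dirichletM_succ, integ_dirichletM by (auto || lia).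
    rewrite Hpsi0. cbn [snd]. rewrite Rminus_0_r, <- Hsin at 1. f_equal. apply rsum_ext.
    intros a _. now rewrite Hpsi.
Qed.

Lemma fhat_test_mart K i : (i < Mk m (S K))%nat ->
  fhat m (test_mart K) i = if (i <? Mk m K)%nat then C0 else (1, 0).
Proof.
  intros Hi. destruct (Nat.lt_ge_cases i K) as [HiK|HKi].
  - pose proof (Mk_gt K). replace (i <? Mk m K)%nat with true by (symmetry; apply Nat.ltb_lt; lia).
    unfold fhat, C0. f_equal;
      (transitivity (integ m (S i) (fun _ => 0)); [|apply integ_zero]);
      apply integ_ext; intros x; rewrite test_mart_early by lia; unfold Cmul, C0; simpl; ring.
  - rewrite fhat_test_mart_high, digit_top_eq0 by lia.
    destruct (i <? Mk m K)%nat; unfold C0; f_equal; ring.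
Qed.

(* This is [r_K]: the other nonzero digits of [i] only meet zero coordinates of [x]. *)
Lemma psi_on_I0 K tau x i : (tau < K)%nat -> inI0 tau x = true ->
  (Mk m K <= i < Mk m K + Mk m tau)%nat ->
  psi m i x = (cos (2 * PI * (INR (x K) / INR (m K))), sin (2 * PI * (INR (x K) / INR (m K)))).
Proof.
  intros HtK Hx Hi. rewrite inI0P in Hx. pose proof (Mk_gt K). pose proof (Mk_double K).
  pose proof (Mk_le tau K ltac:(lia)).
  destruct (Nat.le_exists_sub (Mk m K) i) as [j [Hj _]]; [lia|].
  assert (Hi' : i = (1 * Mk m K + j)%nat) by lia.
  unfold psi. rewrite (rsum_single _ K); [| lia |].
  - replace (digit m i K) with 1%nat; [now rewrite Nat.mul_1_l|].
    rewrite Hi'. symmetry. apply digit_top; pose proof (hm K); lia.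
  - intros k Hk Hne. destruct (Nat.lt_ge_cases k tau).
    + rewrite Hx, Nat.mul_0_r by auto. simpl. unfold Rdiv. ring.
    + replace (digit m i k) with 0%nat; [simpl; unfold Rdiv; ring|]. symmetry.
      destruct (Nat.lt_ge_cases k K).
      * rewrite Hi', digit_shift by auto. apply digit_small. pose proof (Mk_le tau k). lia.
      * apply digit_small. pose proof (Mk_le (S K) k). lia.
Qed.

Lemma Cmod_sigma_test_mart K tau x : (tau < K)%nat -> inI0 tau x = true ->
  Cmod (Defs.sigma m (test_mart K) (Mk m K + Mk m tau) x) =
  INR (Mk m tau) * (INR (Mk m tau) - 1) / 2 / INR (Mk m K + Mk m tau).
Proof.
  intros HtK Hx. set (t := 2 * PI * (INR (x K) / INR (m K))).
  pose proof (Mk_le tau K ltac:(lia)). pose proof (Mk_double K). pose proof (Mk_pos tau).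
  assert (Hsum : csum (Mk m K + Mk m tau) (fun k => Sn m (test_mart K) k x) =
                 Cscale (INR (Mk m tau) * (INR (Mk m tau) - 1) / 2) (cos t, sin t)).
  { unfold Sn. apply csum_partial_sums.
    - intros i Hi. rewrite fhat_test_mart by lia.
      replace (i <? Mk m K)%nat with true by (symmetry; apply Nat.ltb_lt; lia).
      apply Cmul_0_l.
    - intros i Hi. rewrite fhat_test_mart by lia.
      replace (i <? Mk m K)%nat with false by (symmetry; apply Nat.ltb_ge; lia).
      rewrite Cmul_1_l. now apply (psi_on_I0 K tau). }
  unfold Defs.sigma. rewrite Hsum, Cscale_Cscale, Cmod_Cscale_expi.
  assert (1 <= INR (Mk m tau)) by (apply (le_INR 1); lia).
  assert (0 < INR (Mk m K + Mk m tau)) by (apply lt_0_INR; lia).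
  rewrite Rabs_right; [field; lra|].
  apply Rle_ge, Rmult_le_pos; [left; now apply Rinv_0_lt_compat|].
  unfold Rdiv. apply Rmult_le_pos; nra.
Qed.

Lemma Cmod_test_mart_le K k x :
  Cmod (test_mart K k x) <= if inI0 K x then INR (Mk m (S K)) else 0.
Proof.
  pose proof (pos_INR (Mk m (S K))).
  destruct (Nat.le_gt_cases k K) as [Hk|Hk].
  - rewrite test_mart_early, Cmod_C0 by auto. destruct (inI0 K x); lra.
  - rewrite test_mart_late, Cmod_real by lia. unfold dirichletM.
    change (inI0 (S K) x) with (inI0 K x && (x K =? 0)%nat).
    destruct (inI0 K x); cbn [andb].
    + pose proof (Mk_le K (S K) ltac:(lia)) as HM. apply le_INR in HM.
      pose proof (pos_INR (Mk m K)).
      destruct (x K =? 0)%nat; apply Rabs_le; lra.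
    + rewrite Rminus_0_r, Rabs_R0. lra.
Qed.

Lemma fstar_half_test_mart K K' :
  fstar_half m (test_mart K) K' <= sqrt (INR (Mk m (S K))) / INR (Mk m K).
Proof.
  unfold fstar_half. pose proof (INR_Mk_pos K).
  destruct (Nat.le_gt_cases K' K) as [HK'|HK'].
  - eapply Rle_trans; [apply (integ_le K' _ (fun _ => 0))|].
    + intros t _. rewrite <- sqrt_0. apply sqrt_le_1_alt, maxle_le. intros k Hk.
      rewrite test_mart_early, Cmod_C0 by lia. lra.
    + rewrite integ_zero. unfold Rdiv.
      apply Rmult_le_pos; [apply sqrt_pos|left; now apply Rinv_0_lt_compat].
  - eapply Rle_trans.
    + apply (integ_le K' _ (fun x => if inI0 K x then sqrt (INR (Mk m (S K))) else 0)).
      intros t _. set (x := cpoint m K' t).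
      assert (Hmax : maxle K' (fun k => Cmod (test_mart K k x))
                     <= if inI0 K x then INR (Mk m (S K)) else 0)
        by (apply maxle_le; intros; apply Cmod_test_mart_le).
      destruct (inI0 K x); [|rewrite <- sqrt_0]; now apply sqrt_le_1_alt.
    + rewrite (integ_depends_below K), integ_I0; [lra| |lia].
      intros x y Hxy. now rewrite (inI0_ext K x y).
Qed.

Lemma fstar_half_test_mart_le B K K' : (forall k, (m k <= B)%nat) ->
  fstar_half m (test_mart K) K' <= sqrt (INR B / INR (Mk m K)).
Proof.
  intros HB. eapply Rle_trans; [apply fstar_half_test_mart|].
  pose proof (INR_Mk_pos K). pose proof (le_INR _ _ (HB K)).
  replace (sqrt (INR (Mk m (S K))) / INR (Mk m K))
    with (sqrt (INR (Mk m (S K)) / INR (Mk m K) ^ 2))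
    by (rewrite sqrt_div_alt, sqrt_pow2 by nra; reflexivity).
  apply sqrt_le_1_alt. simpl Mk. rewrite mult_INR.
  apply (Rmult_le_reg_r (INR (Mk m K) ^ 2)); [nra|]. field_simplify; nra.
Qed.

Definition shell (tau : nat) (x : point_t) : bool := inI0 tau x && negb (x tau =? 0)%nat.

Lemma shell_inI0 tau x : shell tau x = true -> inI0 tau x = true.
Proof. unfold shell. now rewrite andb_true_iff; intros []. Qed.

Lemma shell_unique tau1 tau2 x : shell tau1 x = true -> shell tau2 x = true -> tau1 = tau2.
Proof.
  unfold shell. rewrite !andb_true_iff, !negb_true_iff, !Nat.eqb_neq, !inI0P.
  intros [H1 Hx1] [H2 Hx2].
  destruct (Nat.lt_total tau1 tau2) as [H|[H|H]]; auto;
    [elim Hx1; apply H2|elim Hx2; apply H1]; auto.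
Qed.

Lemma rsum_nonzero_indicator q : rsum (S q) (fun a => if (a =? 0)%nat then 0 else 1) = INR q.
Proof.
  induction q as [|q IH]; [simpl; ring|].
  cbn [rsum] in *. rewrite IH, S_INR. simpl. ring.
Qed.

Lemma integ_shell tau L : (tau < L)%nat ->
  integ m L (fun x => if shell tau x then 1 else 0) =
  (INR (m tau) - 1) / (INR (m tau) * INR (Mk m tau)).
Proof.
  intros HL. pose proof (INR_Mk_pos tau). pose proof (INR_m_pos tau).
  rewrite (integ_ext _ _ (fun x => / INR (Mk m tau) *
             (dirichletM tau x * (if (x tau =? 0)%nat then 0 else 1)))).
  - rewrite integ_scal, integ_dirichletM_succ
      by (lia || (intros x y Hxy; rewrite Hxy by lia; reflexivity)).
    rewrite (rsum_ext _ _ (fun a => if (a =? 0)%nat then 0 else 1))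
      by (intros; now rewrite upd_eq).
    destruct (m tau) as [|q] eqn:Hq; [pose proof (hm tau); lia|].
    rewrite rsum_nonzero_indicator, S_INR. pose proof (pos_INR q). field. lra.
  - intros x. unfold shell, dirichletM.
    destruct (inI0 tau x), (x tau =? 0)%nat; simpl; field; lra.
Qed.

Section LowerBound.

Variable phi : nat -> R.
Hypothesis hphi1 : forall n, (1 <= n)%nat -> 1 <= phi n.
Hypothesis hmono : forall n n', (1 <= n)%nat -> (n <= n')%nat -> phi n <= phi n'.

(* There [|sigma_(M_K + M_tau) f| = M_tau (M_tau - 1) / (2 (M_K + M_tau)) >= M_tau^2 / (8 M_K)]. *)
Lemma Tphi_integrand_shell K tau x : (1 <= tau < K)%nat -> shell tau x = true ->
  INR (Mk m tau) / sqrt (8 * INR (Mk m K) * phi (2 * Mk m K)) <=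
  sqrt (maxpos (2 * Mk m K) (fun n => Cmod (Defs.sigma m (test_mart K) n x) / phi n)).
Proof.
  intros Htau Hx. set (n := (Mk m K + Mk m tau)%nat).
  pose proof (Mk_le tau K ltac:(lia)) as HtK. pose proof (Mk_gt tau).
  assert (Hn : (1 <= n <= 2 * Mk m K)%nat) by (unfold n; lia).
  set (M := INR (Mk m tau)). set (MK := INR (Mk m K)). set (Phi := phi (2 * Mk m K)).
  assert (HM : 2 <= M) by (apply (le_INR 2); lia).
  assert (HMK : M <= MK) by now apply le_INR.
  assert (Hnpos : 0 < INR n <= 2 * MK) by (unfold n; rewrite plus_INR; fold M MK; lra).
  assert (Hphi : 1 <= phi n <= Phi) by (split; [apply hphi1|apply hmono]; lia).
  rewrite <- (sqrt_pow2 M), <- sqrt_div_alt by nra.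
  apply sqrt_le_1_alt. eapply Rle_trans; [|apply (maxpos_ge _ _ n Hn)]. cbv beta.
  unfold n. rewrite Cmod_sigma_test_mart by (lia || now apply shell_inI0). fold n M.
  apply Rle_trans with (M * (M - 1) / (4 * MK * Phi)).
  - apply (Rmult_le_reg_r (8 * MK * Phi)); [nra|]. field_simplify; nra.
  - unfold Rdiv. rewrite !Rmult_assoc. apply Rmult_le_compat_l; [lra|].
    rewrite <- !Rinv_mult. apply Rmult_le_compat_l; [lra|].
    apply Rinv_le_contravar; nra.
Qed.

(* Summing the shell estimate over [1 <= tau < K]: each shell has measure about [1/M_tau]. *)
Lemma Tphi_half_test_mart_lower K : (1 <= K)%nat ->
  INR (K - 1) / (2 * sqrt (8 * INR (Mk m K) * phi (2 * Mk m K))) <=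
  Tphi_half m phi (test_mart K) (2 * Mk m K).
Proof.
  intros HK. set (N := (2 * Mk m K)%nat). set (s := sqrt (8 * INR (Mk m K) * phi N)).
  assert (Hs : 0 < s).
  { apply sqrt_lt_R0. pose proof (INR_Mk_pos K).
    pose proof (hphi1 N ltac:(pose proof (Mk_pos K); lia)). nra. }
  assert (Hpt : forall x,
    rsum (K - 1) (fun u => INR (Mk m (S u)) / s * (if shell (S u) x then 1 else 0)) <=
    sqrt (maxpos N (fun n => Cmod (Defs.sigma m (test_mart K) n x) / phi n))).
  { intros x. apply rsum_le_single; [apply sqrt_pos| |].
    - intros u Hu. destruct (shell (S u) x) eqn:Hx.
      + rewrite Rmult_1_r. apply Tphi_integrand_shell; auto; lia.
      + rewrite Rmult_0_r. apply sqrt_pos.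
    - intros u v _ _ Hu Hv.
      destruct (shell (S u) x) eqn:Hxu; [|elim Hu; ring].
      destruct (shell (S v) x) eqn:Hxv; [|elim Hv; ring].
      pose proof (shell_unique _ _ x Hxu Hxv). lia. }
  unfold Tphi_half.
  eapply Rle_trans; [|apply (integ_le N (fun x => rsum (K - 1) (fun u =>
    INR (Mk m (S u)) / s * (if shell (S u) x then 1 else 0)))); intros t _; apply Hpt].
  rewrite integ_rsum.
  rewrite (rsum_ext _ _ (fun u => (INR (m (S u)) - 1) / INR (m (S u)) / s)).
  - apply Rle_trans with (rsum (K - 1) (fun _ => / (2 * s))).
    + rewrite rsum_const. right. field. lra.
    + apply rsum_le. intros u _. pose proof (le_INR _ _ (hm (S u))).
      simpl INR in *. unfold Rdiv. rewrite Rinv_mult.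
      apply Rmult_le_compat_r; [left; now apply Rinv_0_lt_compat|].
      apply (Rmult_le_reg_r (INR (m (S u)))); [lra|]. field_simplify; lra.
  - intros u Hu. rewrite integ_scal, integ_shell by (pose proof (Mk_gt K); unfold N; lia).
    pose proof (INR_Mk_pos (S u)). pose proof (INR_m_pos (S u)). field. lra.
Qed.

Lemma Tphi_half_test_mart_sq_lower K : (1 <= K)%nat ->
  INR (K - 1) ^ 2 <=
  32 * INR (Mk m K) * phi (2 * Mk m K) * Tphi_half m phi (test_mart K) (2 * Mk m K) ^ 2.
Proof.
  intros HK. pose proof (Tphi_half_test_mart_lower K HK) as Hlow.
  set (T := Tphi_half m phi (test_mart K) (2 * Mk m K)) in *.
  set (P := 8 * INR (Mk m K) * phi (2 * Mk m K)) in *.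
  assert (HP : 0 < P).
  { unfold P. pose proof (INR_Mk_pos K).
    pose proof (hphi1 (2 * Mk m K) ltac:(pose proof (Mk_pos K); lia)). nra. }
  pose proof (sqrt_lt_R0 P HP). pose proof (pos_INR (K - 1)).
  assert (Hsq : (INR (K - 1) / (2 * sqrt P)) ^ 2 <= T ^ 2)
    by (apply pow_incr; split; [apply Rle_mult_inv_pos; lra|assumption]).
  replace ((INR (K - 1) / (2 * sqrt P)) ^ 2) with (INR (K - 1) ^ 2 / (4 * P)) in Hsq
    by (unfold Rdiv; rewrite Rpow_mult_distr, pow_inv, Rpow_mult_distr, pow2_sqrt by lra;
        field; lra).
  replace (32 * INR (Mk m K) * phi (2 * Mk m K)) with (4 * P) by (unfold P; ring).
  apply (Rmult_le_compat_l (4 * P)) in Hsq; [|lra].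
  replace (4 * P * (INR (K - 1) ^ 2 / (4 * P))) with (INR (K - 1) ^ 2) in Hsq by (field; lra).
  exact Hsq.
Qed.

(* Take [K] with [2 M_K <= n < 2 M_(K+1)] for an [n] where [ln^2 (n+1) / phi n] is large; then
   [ln (n+1) <= (K+2) ln B], and [K + 2 <= 2 (K - 1)] once [K >= 4]. *)
Lemma exists_phi_small_Mk B C : (forall k, (m k <= B)%nat) ->
  (forall (A : R) (N : nat), exists n, (N <= n)%nat /\ (1 <= n)%nat /\
     A < ln (INR n + 1) ^ 2 / phi n) ->
  exists K, (1 <= K)%nat /\ C * phi (2 * Mk m K) < INR (K - 1) ^ 2.
Proof.
  intros HB Hlimsup.
  assert (HB2 : 2 <= INR B)
    by (apply (le_INR 2); pose proof (hm 0%nat); pose proof (HB 0%nat); lia).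
  set (Lb := ln (INR B)). set (C' := Rmax C 1).
  assert (HLb : 0 < Lb) by (unfold Lb; rewrite <- ln_1; apply ln_increasing; lra).
  assert (HC : C <= C' /\ 1 <= C') by (split; [apply Rmax_l|apply Rmax_r]).
  destruct (Hlimsup (4 * C' * Lb ^ 2) (2 * Mk m 4)%nat) as [n [Hn4 [Hn1 HA]]].
  destruct (bracket_Mk n) as [K [HKlo HKhi]]; [pose proof (Mk_pos 4); lia|].
  assert (HK4 : (4 <= K)%nat).
  { destruct (Nat.le_gt_cases 4 K) as [|HK]; auto. pose proof (Mk_le (S K) 4 HK). lia. }
  exists K. split; [lia|].
  assert (Hphi : phi (2 * Mk m K) <= phi n) by (apply hmono; pose proof (Mk_pos K); lia).
  pose proof (hphi1 (2 * Mk m K) ltac:(pose proof (Mk_pos K); lia)).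
  pose proof (hphi1 n Hn1).
  pose proof (ln_succ_le_Mk B K n HB HKhi) as Hln.
  assert (Hln0 : 0 <= ln (INR n + 1))
    by (rewrite <- ln_1; apply ln_le; pose proof (pos_INR n); lra).
  assert (HK : INR 4 <= INR K) by (apply le_INR; lia).
  rewrite plus_INR in Hln. fold Lb in Hln. rewrite minus_INR by lia. simpl INR in *.
  apply (Rmult_lt_compat_r (phi n)) in HA; [|lra].
  unfold Rdiv in HA. rewrite (Rmult_assoc (_ ^ 2)), Rinv_l, Rmult_1_r in HA by lra.
  assert (Hsq : ln (INR n + 1) ^ 2 <= ((INR K + 2) * Lb) ^ 2) by (apply pow_incr; lra).
  assert (4 * C' * phi n < (INR K + 2) ^ 2).
  { apply (Rmult_lt_reg_r (Lb ^ 2)); [apply pow_lt; lra|]. nra. }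
  nra.
Qed.

End LowerBound.

End Vilenkin.

Theorem corollary1
  (m : nat -> nat) (hm2 : forall k, (2 <= m k)%nat)
  (hbd : exists B, forall k, (m k <= B)%nat)
  (phi : nat -> R)
  (hphi1 : forall n, (1 <= n)%nat -> 1 <= phi n)
  (hmono : forall n n', (1 <= n)%nat -> (n <= n')%nat -> phi n <= phi n')
  (hlimsup : forall (B : R) (N : nat), exists n, (N <= n)%nat /\ (1 <= n)%nat /\
                B < (ln (INR n + 1)) ^ 2 / phi n) :
  ~ (exists c : R, forall f : nat -> point_t -> Cx,
        martingale m f ->
        (exists B, forall K, fstar_half m f K <= B) ->
        forall B, (forall K, fstar_half m f K <= B) ->
        forall N, (Tphi_half m phi f N) ^ 2 <= c * B ^ 2).
Proof.
  intros [c Hc]. destruct hbd as [B HB].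
  destruct (exists_phi_small_Mk m hm2 phi hphi1 hmono B (32 * c * INR B) HB hlimsup)
    as [K [HK Hsmall]].
  pose proof (Tphi_half_test_mart_sq_lower m hm2 phi hphi1 hmono K HK) as Hlower.
  set (N := (2 * Mk m K)%nat) in *. set (b := sqrt (INR B / INR (Mk m K))).
  assert (Hf : forall K', fstar_half m (test_mart m K) K' <= b)
    by (intros; now apply fstar_half_test_mart_le).
  pose proof (Hc _ (test_mart_martingale m hm2 K) (ex_intro _ b Hf) b Hf N) as Hupper.
  pose proof (INR_Mk_pos m hm2 K).
  pose proof (hphi1 N ltac:(pose proof (Mk_pos m hm2 K); unfold N; lia)).
  assert (Hb : b ^ 2 = INR B / INR (Mk m K))
    by (apply pow2_sqrt, Rle_mult_inv_pos; [apply pos_INR|lra]).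
  rewrite Hb in Hupper.
  apply (Rmult_le_compat_l (32 * INR (Mk m K) * phi N)) in Hupper; [|nra].
  replace (32 * INR (Mk m K) * phi N * (c * (INR B / INR (Mk m K))))
    with (32 * c * INR B * phi N) in Hupper by (field; lra).
  lra.
Qed.
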